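(* Let $P:=\operatorname{conv}\{p_0,p_1,p_2\}$ such that $p_0,p_1,p_2 \in \mathbb{Z}^2$ are the only integer points in $P$. Let $Q:=\operatorname{conv}\{q_0,q_1,q_2\}$ be a triangle whose vertices are given by the barycentric coordinates with respect to $P$, that is, by a $3\times 3$-matrix $B$ such that \[ \begin{pmatrix} q_0^\top & 1 \\ q_1^\top & 1 \\ q_2^\top & 1 \end{pmatrix} = B \begin{pmatrix} p_0^\top & 1 \\ p_1^\top & 1 \\ p_2^\top & 1 \end{pmatrix}. \] Then \[ \operatorname{lw}(Q) = \min \{ \|D B z\|_\infty : z \in \mathbb{Z}^3 \text{ and the coordinates of } z \text{ are not all equal}\}, \] where \[ D:=\begin{pmatrix} -1 & 1 & 0 \\ 0 & -1 & 1 \\ 1 & 0 & -1 \end{pmatrix}. \] Furthermore, if $p_i=(1-x_i) q_{i+1} + x_i q_{i+2}$ for $i=0,1,2$ (indices modulo 3) with $0<x_i<1$ (that is, $Q$ is circumscribed about $P$), then \[ \operatorname{lw}(Q) = \frac{\min \{ \max_{i=0,1,2} |x_i y_i + (1-x_{i+1}) y_{i+1}| : y \in \mathbb{Z}^3 \setminus\{o\},\ y_0+y_1+y_2=0\}}{x_0x_1x_2 + (1-x_0)(1-x_1)(1-x_2)} \] and \[ \operatorname{area}(Q) = \frac{1}{2 (x_0x_1x_2 + (1-x_0)(1-x_1)(1-x_2))}. \]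
   Context: Vectors in $\mathbb{R}^2$ are column vectors, $^\top$ denotes transposition, $o$ the origin, and $\|\cdot\|_\infty$ the maximum norm. For a closed convex set $K\subseteq\mathbb{R}^2$ with non-empty interior, the width function is $w(K,u):=\max\{u^\top x : x\in K\}-\min\{u^\top x: x\in K\}$ for $u\in\mathbb{R}^2$, and the lattice width is $\operatorname{lw}(K):=\min\{w(K,u): u\in\mathbb{Z}^2\setminus\{o\}\}$. Sequences with 3 elements are indexed modulo 3. *)

From HB Require Import structures.
From mathcomp Require Import all_boot all_order all_algebra.
From mathcomp Require Import boolp classical_sets reals.
Set Implicit Arguments. Unset Strict Implicit. Unset Printing Implicit Defensive.
Import Order.TTheory GRing.Theory Num.Theory.
Local Open Scope ring_scope.
Local Open Scope classical_set_scope.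

Section Defs.
Variable R : realType.

Definition s3 (i : 'I_3) : 'I_3 := ordS i.

Definition i0 : 'I_3 := ord0.
Definition i1 : 'I_3 := inord 1.
Definition i2 : 'I_3 := inord 2.

Definition max3 (f : 'I_3 -> R) : R := Num.max (f i0) (Num.max (f i1) (f i2)).

Definition dot (u x : R * R) : R := u.1 * x.1 + u.2 * x.2.

Definition Z2 : set (R * R) := [set x | exists a b : int, x = (a%:~R, b%:~R)].

Definition conv3 (p : 'I_3 -> R * R) : set (R * R) :=
  [set x | exists a : 'I_3 -> R, (forall i, 0 <= a i) /\ \sum_(i < 3) a i = 1 /\
     x = (\sum_(i < 3) a i * (p i).1, \sum_(i < 3) a i * (p i).2)].

Definition width (K : set (R * R)) (u : R * R) : R :=
  sup [set dot u x | x in K] - inf [set dot u x | x in K].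

Definition lw (K : set (R * R)) : R :=
  inf [set width K u | u in [set u | Z2 u /\ u <> (0, 0)]].

Definition is_min (S : set R) (m : R) : Prop := S m /\ forall s, S s -> m <= s.

Definition homog (p : 'I_3 -> R * R) : 'M[R]_3 :=
  \matrix_(i < 3, j < 3)
     (if (j : nat) == 0%N then (p i).1 else if (j : nat) == 1%N then (p i).2 else 1).

Definition Dmat : 'M[R]_3 :=
  \matrix_(i < 3, j < 3) (if j == i then -1 else if j == s3 i then 1 else 0).

Definition norminf (v : 'cV[R]_3) : R := max3 (fun i => `|v i 0|).

Definition zcol (z : 'I_3 -> int) : 'cV[R]_3 := \col_(i < 3) (z i)%:~R.

Definition tri_area (q : 'I_3 -> R * R) : R := `|\det (homog q)| / 2.

End Defs.
Arguments Dmat {R}.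
Arguments zcol {R}.
Arguments Z2 {R}.

From HB Require Import structures.
From mathcomp Require Import all_boot all_order all_algebra.
From mathcomp Require Import boolp classical_sets reals.
From mathcomp Require Import ring lra zify.
Import Order.TTheory GRing.Theory Num.Theory.
Local Open Scope ring_scope.
Local Open Scope classical_set_scope.

(* An empty lattice triangle P is unimodular: reducing the affine coordinates of a
   lattice point (with respect to p0 and the edges of P) modulo 1 produces a lattice
   point of P or of its reflection p1 + p2 - P, hence a vertex, so these coordinates
   are integers.  Consequently the vectors z in Z^3 are exactly the restrictions
   (u.p_i + c)_i of integer affine functions, with u = 0 iff z is constant.  As B maps
   the rows (p_i, 1) to the rows (q_i, 1), D B z lists the successive differences of
   the u.q_i, whose largest absolute value is the width of Q in direction u; the
   lattice width is attained since this width grows linearly in |u|.  In the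
   circumscribed case every zero-sum y in Z^3 is (u.(p_{i+2} - p_{i+1}))_i, each
   x_i y_i + (1 - x_{i+1}) y_{i+1} is den times a difference of the u.q_i, and
   det P = den * det Q with |det P| = 1. *)

Lemma s3_0 : s3 i0 = i1. Proof. by apply/val_inj; rewrite /= inordK. Qed.
Lemma s3_1 : s3 i1 = i2. Proof. by apply/val_inj; rewrite /= !inordK. Qed.
Lemma s3_2 : s3 i2 = i0. Proof. by apply/val_inj; rewrite /= !inordK. Qed.

Lemma ord3P (i : 'I_3) : i = i0 \/ i = i1 \/ i = i2.
Proof.
case: i => [[|[|[|n]]] lt_n3] //; [left | right; left | right; right];
  by apply/val_inj; rewrite /= ?inordK.
Qed.

Lemma eq_i0i1 : (i0 == i1) = false. Proof. by rewrite -val_eqE /= inordK. Qed.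
Lemma eq_i0i2 : (i0 == i2) = false. Proof. by rewrite -val_eqE /= inordK. Qed.
Lemma eq_i1i2 : (i1 == i2) = false. Proof. by rewrite -val_eqE /= !inordK. Qed.

Definition ord3E := (eq_i0i1, eq_i0i2, eq_i1i2, eq_sym i1 i0, eq_sym i2 i0,
  eq_sym i2 i1, eqxx, s3_0, s3_1, s3_2).

Lemma sum_ord3 (V : nmodType) (f : 'I_3 -> V) : \sum_(i < 3) f i = f i0 + f i1 + f i2.
Proof.
rewrite !big_ord_recr big_ord0 /= add0r.
by congr (f _ + f _ + f _); apply: val_inj; rewrite /= ?inordK.
Qed.

Lemma det_mx33 (R : comNzRingType) (A : 'M[R]_3) : \det A =
  A i0 i0 * (A i1 i1 * A i2 i2 - A i1 i2 * A i2 i1)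
  - A i0 i1 * (A i1 i0 * A i2 i2 - A i1 i2 * A i2 i0)
  + A i0 i2 * (A i1 i0 * A i2 i1 - A i1 i1 * A i2 i0).
Proof.
rewrite {1}(_ : A = \matrix_(i, j) A (inord i) (inord j)); last first.
  by apply/matrixP => i j; rewrite mxE !inord_val.
rewrite (expand_det_row _ ord0) !big_ord_recr big_ord0 /= add0r /cofactor.
rewrite !(expand_det_row _ ord0) !big_ord_recr !big_ord0 /= !add0r /cofactor.
rewrite !det_mx11 !mxE /bump /= -/i1 -/i2.
have -> : inord 0 = i0 by apply: val_inj; rewrite /= inordK.
ring.
Qed.

Definition idet (X Y : 'I_3 -> int) : int :=
  (X i1 - X i0) * (Y i2 - Y i0) - (Y i1 - Y i0) * (X i2 - X i0).

Lemma int_unit_sqr (d k : int) : d * k = 1 -> d ^+ 2 = 1.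
Proof. by rewrite mulrC => /intUnitRing.unitzPl; rewrite qualifE => /orP[] /eqP ->. Qed.

Section UnimodularTriangle.
Variables X Y : 'I_3 -> int.
Hypothesis unimodular : idet X Y ^+ 2 = 1.

Definition lin (u1 u2 : int) (i : 'I_3) : int := u1 * X i + u2 * Y i.

Lemma affine_on_vertices (z : 'I_3 -> int) :
  exists u1 u2 c, forall i, z i = lin u1 u2 i + c.
Proof.
set D := idet X Y.
(* Cramer's rule, using D^-1 = D *)
pose u1 := D * ((z i1 - z i0) * (Y i2 - Y i0) - (z i2 - z i0) * (Y i1 - Y i0)).
pose u2 := D * ((X i1 - X i0) * (z i2 - z i0) - (X i2 - X i0) * (z i1 - z i0)).
exists u1, u2, (z i0 - lin u1 u2 i0) => i; apply/eqP; rewrite -subr_eq0.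
suff -> : z i - (lin u1 u2 i + (z i0 - lin u1 u2 i0)) = (1 - D ^+ 2) * (z i - z i0).
  by rewrite unimodular subrr mul0r.
by case: (ord3P i) => [->|[->|->]]; rewrite /lin /u1 /u2 /D /idet; ring.
Qed.

Lemma lin_const_eq0 u1 u2 :
  lin u1 u2 i1 = lin u1 u2 i0 -> lin u1 u2 i2 = lin u1 u2 i0 -> u1 = 0 /\ u2 = 0.
Proof.
move=> e1 e2; set D := idet X Y.
have D2 (v : int) : v = v * D ^+ 2 by rewrite unimodular mulr1.
split; rewrite [LHS]D2.
  have -> : u1 * D ^+ 2 = D * ((Y i2 - Y i0) * (lin u1 u2 i1 - lin u1 u2 i0)
                              - (Y i1 - Y i0) * (lin u1 u2 i2 - lin u1 u2 i0)).
    by rewrite /D /idet /lin; ring.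
  by rewrite e1 e2 !subrr; ring.
have -> : u2 * D ^+ 2 = D * ((X i1 - X i0) * (lin u1 u2 i2 - lin u1 u2 i0)
                            - (X i2 - X i0) * (lin u1 u2 i1 - lin u1 u2 i0)).
  by rewrite /D /idet /lin; ring.
by rewrite e1 e2 !subrr; ring.
Qed.

Lemma zero_sum_edge_values (y : 'I_3 -> int) : y i0 + y i1 + y i2 = 0 ->
  exists u1 u2, forall i, y i = lin u1 u2 (s3 (s3 i)) - lin u1 u2 (s3 i).
Proof.
move=> sum_y0.
pose z i := if i == i0 then 0 else if i == i1 then y i2 else - y i1.
have [u1 [u2 [c z_lin]]] := affine_on_vertices z.
exists u1, u2 => i.
have -> : lin u1 u2 (s3 (s3 i)) - lin u1 u2 (s3 i) = z (s3 (s3 i)) - z (s3 i).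
  by rewrite !z_lin; ring.
by case: (ord3P i) => [->|[->|->]]; rewrite /z !ord3E; lia.
Qed.

End UnimodularTriangle.

Arguments affine_on_vertices {X Y}.
Arguments lin_const_eq0 {X Y}.
Arguments zero_sum_edge_values {X Y}.

Section PlaneTriangles.
Context {R : realType}.
Implicit Types (p q : 'I_3 -> R * R) (u : R * R) (f : 'I_3 -> R).

Definition cross p : R :=
  ((p i1).1 - (p i0).1) * ((p i2).2 - (p i0).2)
  - ((p i1).2 - (p i0).2) * ((p i2).1 - (p i0).1).

Lemma homogE p i :
  [/\ homog p i i0 = (p i).1, homog p i i1 = (p i).2 & homog p i i2 = 1].
Proof. by rewrite !mxE /= ?inordK. Qed.

Lemma det_homog p : \det (homog p) = cross p.
Proof.
rewrite det_mx33 /cross.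
have [a0 b0 c0] := homogE p i0; have [a1 b1 c1] := homogE p i1.
have [a2 b2 c2] := homogE p i2.
rewrite a0 b0 c0 a1 b1 c1 a2 b2 c2; ring.
Qed.

Definition min3 f : R := Num.min (f i0) (Num.min (f i1) (f i2)).

Lemma le_max3 f i : f i <= max3 f.
Proof. by case: (ord3P i) => [->|[->|->]]; rewrite /max3 !le_max lexx ?orbT. Qed.

Lemma max3_le f c : (forall i, f i <= c) -> max3 f <= c.
Proof. by move=> le_fc; rewrite /max3 !ge_max !le_fc. Qed.

Lemma min3_le f i : min3 f <= f i.
Proof. by case: (ord3P i) => [->|[->|->]]; rewrite /min3 !ge_min lexx ?orbT. Qed.

Lemma le_min3 f c : (forall i, c <= f i) -> c <= min3 f.
Proof. by move=> le_cf; rewrite /min3 !le_min !le_cf. Qed.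

Lemma max3_mem f : exists i, max3 f = f i.
Proof.
by rewrite /max3 !maxElt; repeat case: ifP => _; eexists.
Qed.

Lemma min3_mem f : exists i, min3 f = f i.
Proof.
by rewrite /min3 !minElt; repeat case: ifP => _; eexists.
Qed.

Definition spread f : R := max3 (fun i => `|f (s3 i) - f i|).

Lemma spread_shift f c : spread (fun i => f i + c) = spread f.
Proof. by congr max3; apply: funext => i; rewrite opprD addrACA subrr addr0. Qed.

Lemma dist_le_spread f i j : `|f i - f j| <= spread f.
Proof.
have le_edge k : `|f (s3 k) - f k| <= spread f by apply: (le_max3 (fun k => _)).
have e0 := le_edge i0; have e1 := le_edge i1; have e2 := le_edge i2.
rewrite !ord3E in e0 e1 e2.
have spread_ge0 : 0 <= spread f := le_trans (normr_ge0 _) e0.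
by case: (ord3P i) => [->|[->|->]]; case: (ord3P j) => [->|[->|->]];
  rewrite ?subrr ?normr0 // distrC.
Qed.

Lemma spread_max3_min3 f : spread f = max3 f - min3 f.
Proof.
apply/eqP; rewrite eq_le; apply/andP; split.
  apply: max3_le => i; rewrite ler_norml.
  have := le_max3 f i; have := min3_le f i.
  have := le_max3 f (s3 i); have := min3_le f (s3 i); lra.
have [i ->] := max3_mem f; have [j ->] := min3_mem f.
exact: le_trans (ler_norm _) (dist_le_spread f i j).
Qed.

Lemma is_min_inf {S : set R} {m} : is_min S m -> inf S = m.
Proof.
move=> [Sm le_mS]; apply/eqP; rewrite eq_le; apply/andP; split.
  by apply: ge_inf => //; exists m.
by apply: lb_le_inf => //; exists m.
Qed.

Lemma conv3_vertex q k : conv3 q (q k).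
Proof.
exists (fun i => (i == k)%:R); split; [by move=> i; case: (_ == _)|split].
  by rewrite sum_ord3; case: (ord3P k) => [->|[->|->]]; rewrite !ord3E /=; ring.
rewrite !sum_ord3; case: (ord3P k) => [->|[->|->]]; rewrite !ord3E /=.
all: by rewrite !mul1r !mul0r ?addr0 ?add0r; case: (q _).
Qed.

Lemma conv3_dot_between q u x m M : conv3 q x ->
  (forall i, m <= dot u (q i) <= M) -> m <= dot u x <= M.
Proof.
move=> [a [a_ge0 [sum_a ->]]] bnd.
have -> : dot u (\sum_(i < 3) a i * (q i).1, \sum_(i < 3) a i * (q i).2) =
  a i0 * dot u (q i0) + a i1 * dot u (q i1) + a i2 * dot u (q i2).
  by rewrite /dot !sum_ord3 /=; ring.
move: sum_a; rewrite sum_ord3 => sum_a.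
have := a_ge0 i0; have := a_ge0 i1; have := a_ge0 i2.
have /andP[? ?] := bnd i0; have /andP[? ?] := bnd i1; have /andP[? ?] := bnd i2.
move=> *; apply/andP; split; nra.
Qed.

Lemma width_conv3 q u : width (conv3 q) u = spread (fun i => dot u (q i)).
Proof.
set f := fun i => dot u (q i); set E := [set dot u x | x in conv3 q].
have Ef i : E (f i) by exists (q i); first exact: conv3_vertex.
have E_between e : E e -> min3 f <= e <= max3 f.
  by move=> [x qx <-]; apply: conv3_dot_between qx _ => i;
     rewrite min3_le le_max3.
have supE : sup E = max3 f.
  apply/eqP; rewrite eq_le; apply/andP; split.
    by apply: ge_sup; [exists (f i0) | move=> e /E_between /andP[]].
  have supE : has_sup E by split; [exists (f i0) | exists (max3 f) => e /E_between /andP[]].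
  by apply: max3_le => i; apply: sup_upper_bound.
have infE : inf E = min3 f.
  apply/eqP; rewrite eq_le; apply/andP; split; last first.
    by apply: lb_le_inf; [exists (f i0) | move=> e /E_between /andP[]].
  have infE : has_lbound E by exists (min3 f) => e /E_between /andP[].
  by apply: le_min3 => i; apply: ge_inf.
by rewrite /width -/E supE infE spread_max3_min3.
Qed.

Definition aff_col u (c : R) : 'cV[R]_3 :=
  \col_(j < 3) (if (j : nat) == 0%N then u.1 else if (j : nat) == 1%N then u.2 else c).

Lemma homog_aff_col p u c i : (homog p *m aff_col u c) i 0 = dot u (p i) + c.
Proof.
rewrite mxE sum_ord3; have [-> -> ->] := homogE p i.
by rewrite !mxE ?inordK //= /dot; ring.
Qed.

Lemma Dmat_mul (w : 'cV[R]_3) i : (Dmat *m w) i 0 = w (s3 i) 0 - w i 0.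
Proof.
rewrite mxE sum_ord3 !mxE.
by case: (ord3P i) => [->|[->|->]]; rewrite !ord3E /=; ring.
Qed.

Lemma norminf_Dmat (w : 'cV[R]_3) : norminf (Dmat *m w) = spread (fun i => w i 0).
Proof. by rewrite /norminf /spread /max3 !Dmat_mul. Qed.

Lemma norminf_Dmat_homog q u c :
  norminf (Dmat *m (homog q *m aff_col u c)) = width (conv3 q) u.
Proof.
rewrite norminf_Dmat width_conv3 -[RHS](spread_shift _ c).
by congr spread; apply: funext => i; rewrite homog_aff_col.
Qed.

Definition zpt (a b : int) : R * R := (a%:~R, b%:~R).

Lemma dot_zpt a b x y : dot (zpt a b) (zpt x y) = (a * x + b * y)%:~R.
Proof. by rewrite /dot /= rmorphD !rmorphM. Qed.

Lemma zpt_eq0 a b : zpt a b = (0, 0) <-> (a, b) = (0, 0).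
Proof.
rewrite /zpt; split=> [[/eqP a0 /eqP b0] | [-> ->]] //.
by move: a0 b0; rewrite !intr_eq0 => /eqP -> /eqP ->.
Qed.

Lemma int2_argmin (F : int -> int -> R) (P : int -> int -> bool) (K : nat) a0 b0 :
  P a0 b0 ->
  (forall a b, P a b -> F a b <= F a0 b0 -> (absz a <= K)%N /\ (absz b <= K)%N) ->
  exists a b, P a b /\ forall a' b', P a' b' -> F a b <= F a' b'.
Proof.
move=> P0 bnd.
pose enc (k : 'I_K.*2.+1 * 'I_K.*2.+1) : int * int := (k.1%:Z - K%:Z, k.2%:Z - K%:Z).
have enc_onto a b : P a b -> F a b <= F a0 b0 -> exists k, enc k = (a, b).
  move=> Pab /(bnd _ _ Pab) [le_aK le_bK].
  exists (inord (absz (a + K%:Z)), inord (absz (b + K%:Z))).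
  by rewrite /enc /= !inordK; [congr (_, _); lia | lia | lia].
have [k0 enc_k0] := enc_onto _ _ P0 (lexx _).
pose Fk k := F (enc k).1 (enc k).2.
case: (@arg_minP _ _ _ k0 (fun k => P (enc k).1 (enc k).2) Fk).
  by rewrite enc_k0.
move=> k Pk k_min; exists (enc k).1, (enc k).2; split=> // a b Pab.
case: (leP (F a b) (F a0 b0)) => [le_ab | lt_ab].
  by have [k' enc_k'] := enc_onto _ _ Pab le_ab; have := k_min k'; rewrite /Fk enc_k'; apply.
by apply: le_trans (ltW lt_ab); have := k_min k0; rewrite /Fk enc_k0; apply.
Qed.

Definition edge_norm q : R :=
  `|(q i1).1 - (q i0).1| + `|(q i1).2 - (q i0).2|
  + `|(q i2).1 - (q i0).1| + `|(q i2).2 - (q i0).2|.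

Lemma coord_le_spread q u (S := spread (fun i => dot u (q i))) :
  `|u.1| * `|cross q| <= edge_norm q * S /\ `|u.2| * `|cross q| <= edge_norm q * S.
Proof.
set e := (q i1).1 - (q i0).1; set f := (q i1).2 - (q i0).2.
set g := (q i2).1 - (q i0).1; set h := (q i2).2 - (q i0).2.
set t1 := dot u (q i1) - dot u (q i0); set t2 := dot u (q i0) - dot u (q i2).
have t1S : `|t1| <= S := dist_le_spread _ i1 i0.
have t2S : `|t2| <= S := dist_le_spread _ i0 i2.
(* Cramer's rule for the linear system [t1 = u.(q1 - q0), -t2 = u.(q2 - q0)] *)
rewrite -!normrM.
have -> : u.1 * cross q = h * t1 + f * t2 by rewrite /cross /t1 /t2 /dot /e /f /g /h; ring.
have -> : u.2 * cross q = - (e * t2 + g * t1) by rewrite /cross /t1 /t2 /dot /e /f /g /h; ring.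
rewrite normrN /edge_norm -/e -/f -/g -/h.
have S_ge0 : 0 <= S := le_trans (normr_ge0 _) t1S.
have le_prod (a t : R) : `|t| <= S -> `|a| * `|t| <= `|a| * S by apply: ler_wpM2l.
have prod_ge0 (a : R) : 0 <= `|a| * S := mulr_ge0 (normr_ge0 a) S_ge0.
have := le_prod h _ t1S; have := le_prod f _ t2S.
have := le_prod e _ t2S; have := le_prod g _ t1S.
have := prod_ge0 e; have := prod_ge0 f; have := prod_ge0 g; have := prod_ge0 h.
move=> *; split; apply: le_trans (ler_normD _ _) _; rewrite !normrM mulrDl; lra.
Qed.

Lemma absz_le_floor (a : int) (C : R) :
  `|a%:~R| <= C -> (absz a <= absz (Num.floor C))%N.
Proof.
rewrite -intr_norm -floor_ge_int => le_aC.
by rewrite -lez_nat abszE (le_trans le_aC) // ler_norm.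
Qed.

Lemma lattice_width_attained q : cross q != 0 ->
  exists a b, (a, b) != (0, 0) /\ forall a' b', (a', b') != (0, 0) ->
    spread (fun i => dot (zpt a b) (q i)) <= spread (fun i => dot (zpt a' b') (q i)).
Proof.
move=> q_nondeg; have cross_gt0 : 0 < `|cross q| by rewrite normr_gt0.
pose F a b := spread (fun i => dot (zpt a b) (q i)).
pose C := edge_norm q * F 1 0 / `|cross q|.
apply: (@int2_argmin F (fun a b => (a, b) != (0, 0)) (absz (Num.floor C)) 1 0) => //.
move=> a b _ le_F; have [le_a le_b] := coord_le_spread q (zpt a b).
have le_C (x : R) : `|x| * `|cross q| <= edge_norm q * F a b -> `|x| <= C.
  move=> le_x; rewrite /C ler_pdivlMr //; apply: le_trans le_x _.
  by apply: ler_wpM2l => //; rewrite /edge_norm !addr_ge0.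
by split; apply: absz_le_floor; apply: le_C.
Qed.

Definition lattice_widths (K : set (R * R)) : set R :=
  [set width K u | u in [set u | Z2 u /\ u <> (0, 0)]].

Lemma lw_conv3_is_min q : cross q != 0 ->
  is_min (lattice_widths (conv3 q)) (lw (conv3 q)).
Proof.
move=> /lattice_width_attained [a [b [ab_neq0 ab_min]]].
suff min_ab : is_min (lattice_widths (conv3 q)) (width (conv3 q) (zpt a b)).
  by rewrite /lw (is_min_inf min_ab).
split.
  by exists (zpt a b) => //; split; [exists a, b | move/zpt_eq0/eqP; apply/negP].
move=> _ [_ [[a' [b' ->]] /zpt_eq0 /eqP ab'_neq0] <-].
by rewrite !width_conv3; apply: ab_min.
Qed.

Lemma cross_zpt (X Y : 'I_3 -> int) : cross (fun i => zpt (X i) (Y i)) = (idet X Y)%:~R.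
Proof. by rewrite /cross /idet /= !(rmorphB, rmorphM). Qed.

Lemma zcol_lin (X Y : 'I_3 -> int) (a b c : int) :
  zcol (fun i => lin X Y a b i + c)
  = homog (fun i => zpt (X i) (Y i)) *m aff_col (zpt a b) c%:~R.
Proof. by apply/matrixP => i j; rewrite ord1 homog_aff_col dot_zpt mxE rmorphD. Qed.

Definition bary p (al be : R) : R * R :=
  ((p i0).1 + al * ((p i1).1 - (p i0).1) + be * ((p i2).1 - (p i0).1),
   (p i0).2 + al * ((p i1).2 - (p i0).2) + be * ((p i2).2 - (p i0).2)).

Lemma bary_inj {p al be al' be'} : cross p != 0 ->
  bary p al be = bary p al' be' -> al = al' /\ be = be'.
Proof.
move=> nondeg eq_bary.
have eq0 (v : R) : v * cross p = 0 -> v = 0.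
  by move/eqP; rewrite mulf_eq0 (negbTE nondeg) orbF => /eqP.
set d1 := (bary p al be).1 - (bary p al' be').1.
set d2 := (bary p al be).2 - (bary p al' be').2.
have d0 : d1 = 0 /\ d2 = 0 by rewrite /d1 /d2 eq_bary !subrr.
split; apply/eqP; rewrite -subr_eq0; apply/eqP/eq0.
  have -> : (al - al') * cross p = ((p i2).2 - (p i0).2) * d1 - ((p i2).1 - (p i0).1) * d2.
    by rewrite /d1 /d2 /bary /cross /=; ring.
  by case: d0 => -> ->; ring.
have -> : (be - be') * cross p = ((p i1).1 - (p i0).1) * d2 - ((p i1).2 - (p i0).2) * d1.
  by rewrite /d1 /d2 /bary /cross /=; ring.
by case: d0 => -> ->; ring.
Qed.

Lemma conv3_bary p al be :
  0 <= al -> 0 <= be -> al + be <= 1 -> conv3 p (bary p al be).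
Proof.
move=> al_ge0 be_ge0 le1.
exists (fun i => if i == i0 then 1 - al - be else if i == i1 then al else be).
split; first by move=> i; case: (ord3P i) => [->|[->|->]]; rewrite !ord3E //; lra.
by rewrite !sum_ord3 !ord3E; split; [ring | apply: injective_projections => /=; ring].
Qed.

Lemma vertex_bary p i : p i = bary p (i == i1)%:R (i == i2)%:R.
Proof.
by case: (ord3P i) => [->|[->|->]]; rewrite !ord3E /bary;
  apply: injective_projections => /=; ring.
Qed.

Section EmptyLatticeTriangle.
Context {X Y : 'I_3 -> int}.
Local Notation p := (fun i => zpt (X i) (Y i)).
Hypothesis p_empty : forall x, Z2 x -> conv3 p x -> exists i, x = p i.
Hypothesis p_nondeg : cross p != 0.

Lemma Z2_bary_shift {al be} (k l : int) :
  Z2 (bary p al be) -> Z2 (bary p (al - k%:~R) (be - l%:~R)).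
Proof.
move=> [s [t [es et]]].
exists (s - k * (X i1 - X i0) - l * (X i2 - X i0)), (t - k * (Y i1 - Y i0) - l * (Y i2 - Y i0)).
rewrite /bary /= in es et *; apply: injective_projections => /=;
  rewrite !(intrB, intrM) -?es -?et; ring.
Qed.

Lemma Z2_bary_reflect {al be} : Z2 (bary p al be) -> Z2 (bary p (1 - al) (1 - be)).
Proof.
move=> [s [t [es et]]]; exists (X i1 + X i2 - s), (Y i1 + Y i2 - t).
rewrite /bary /= in es et *; apply: injective_projections => /=;
  rewrite !(intrB, intrD) -?es -?et; ring.
Qed.

Lemma empty_bary_01 {al be} : Z2 (bary p al be) ->
  0 <= al -> 0 <= be -> al + be <= 1 -> (al = 0 \/ al = 1) /\ (be = 0 \/ be = 1).
Proof.
move=> /p_empty Z_ab al_ge0 be_ge0 le1.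
have [i eq_i] := Z_ab (conv3_bary _ _ _ al_ge0 be_ge0 le1).
have [-> ->] := bary_inj p_nondeg (etrans eq_i (vertex_bary p i)).
by split; case: (_ == _); [right | left | right | left].
Qed.

Lemma empty_bary_int {al be} :
  Z2 (bary p al be) -> al \is a Num.int /\ be \is a Num.int.
Proof.
move=> Z_ab.
suff : al - (Num.floor al)%:~R = 0 /\ be - (Num.floor be)%:~R = 0.
  by rewrite !intrEfloor => -[? ?]; split; apply/eqP; lra.
have frac_itv (v : R) : 0 <= v - (Num.floor v)%:~R < 1.
  by have := floor_itv v; rewrite intrD => /andP[? ?]; apply/andP; split; lra.
have := Z2_bary_shift (Num.floor al) (Num.floor be) Z_ab.
have := frac_itv al; have := frac_itv be.
move: (al - _) (be - _) => al' be' /andP[? ?] /andP[? ?] Z'.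
case: (lerP (al' + be') 1) => [le1 | gt1].
  have [] : (al' = 0 \/ al' = 1) /\ (be' = 0 \/ be' = 1).
    by apply: (empty_bary_01 Z'); lra.
  by case=> ? [] ?; lra.
have [] : (1 - al' = 0 \/ 1 - al' = 1) /\ (1 - be' = 0 \/ 1 - be' = 1).
  by apply: (empty_bary_01 (Z2_bary_reflect Z')); lra.
by case=> ? [] ?; lra.
Qed.

Lemma empty_triangle_unimodular : idet X Y ^+ 2 = 1.
Proof.
pose D := cross p.
(* p0 + (1, 0) and p0 + (0, 1) have integral coordinates, so the inverse of the edge
   matrix is integral and its determinant 1 / D is an integer *)
have e1 : bary p (((Y i2)%:~R - (Y i0)%:~R) / D) (- ((Y i1)%:~R - (Y i0)%:~R) / D)
          = zpt (X i0 + 1) (Y i0).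
  apply: injective_projections; rewrite /= ?rmorphD /D /cross /=; field; exact: p_nondeg.
have e2 : bary p (- ((X i2)%:~R - (X i0)%:~R) / D) (((X i1)%:~R - (X i0)%:~R) / D)
          = zpt (X i0) (Y i0 + 1).
  apply: injective_projections; rewrite /= ?rmorphD /D /cross /=; field; exact: p_nondeg.
have [int1 int2] : _ /\ _ := empty_bary_int (ex_intro _ _ (ex_intro _ _ e1)).
have [int3 int4] : _ /\ _ := empty_bary_int (ex_intro _ _ (ex_intro _ _ e2)).
have /intrP [k Dk] : D^-1 \is a Num.int.
  have -> : D^-1 = ((Y i2)%:~R - (Y i0)%:~R) / D * (((X i1)%:~R - (X i0)%:~R) / D)
                   - (- ((Y i1)%:~R - (Y i0)%:~R) / D) * (- ((X i2)%:~R - (X i0)%:~R) / D).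
    by rewrite /D /cross /=; field; exact: p_nondeg.
  by apply: rpredB; apply: rpredM.
apply: (@int_unit_sqr _ k); apply/eqP; rewrite -(eqr_int R) intrM -cross_zpt.
by rewrite -/D -Dk mulfV.
Qed.

End EmptyLatticeTriangle.

Lemma norm_cross_unimodular {X Y : 'I_3 -> int} :
  idet X Y ^+ 2 = 1 -> `|cross (fun i => zpt (X i) (Y i))| = 1.
Proof.
move/eqP; rewrite sqrf_eq1 cross_zpt -intr_norm.
by case/orP=> /eqP ->; rewrite ?normrN normr1.
Qed.

Lemma is_min_scale (S : set R) m c :
  0 < c -> is_min S m -> is_min [set c * s | s in S] (c * m).
Proof.
move=> c_gt0 [Sm m_le]; split; first by exists m.
by move=> _ [s Ss <-]; rewrite ler_pM2l // m_le.
Qed.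

Lemma max3_pM f c : 0 <= c -> max3 (fun i => c * f i) = c * max3 f.
Proof. by move=> c_ge0; rewrite /max3 !maxr_pMr. Qed.

Definition circ_den (x : 'I_3 -> R) : R :=
  x i0 * x i1 * x i2 + (1 - x i0) * (1 - x i1) * (1 - x i2).

Lemma circ_den_gt0 x : (forall i, 0 < x i < 1) -> 0 < circ_den x.
Proof.
move=> x01; have /andP[? ?] := x01 i0; have /andP[? ?] := x01 i1.
have /andP[? ?] := x01 i2.
have : 0 < x i0 * x i1 * x i2 by rewrite !mulr_gt0.
have : 0 <= (1 - x i0) * (1 - x i1) * (1 - x i2) by rewrite !mulr_ge0 // subr_ge0 ltW.
rewrite /circ_den; lra.
Qed.

Section Circumscribed.
Context {p q : 'I_3 -> R * R} {x : 'I_3 -> R}.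
Hypothesis p_on_edges : forall i,
  p i = ((1 - x i) * (q (s3 i)).1 + x i * (q (s3 (s3 i))).1,
         (1 - x i) * (q (s3 i)).2 + x i * (q (s3 (s3 i))).2).

Lemma cross_circumscribed : cross p = circ_den x * cross q.
Proof. by rewrite /cross !p_on_edges !ord3E /circ_den /=; ring. Qed.

Lemma circumscribed_edge u i
    (y := fun j => dot u (p (s3 (s3 j))) - dot u (p (s3 j))) :
  x i * y i + (1 - x (s3 i)) * y (s3 i) = circ_den x * (dot u (q (s3 i)) - dot u (q i)).
Proof.
by rewrite /y; case: (ord3P i) => [->|[->|->]];
  rewrite !p_on_edges !ord3E /dot /circ_den /=; ring.
Qed.

Lemma circumscribed_max3 u (y := fun j => dot u (p (s3 (s3 j))) - dot u (p (s3 j))) :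
  0 < circ_den x ->
  max3 (fun i => `|x i * y i + (1 - x (s3 i)) * y (s3 i)|)
  = circ_den x * spread (fun i => dot u (q i)).
Proof.
move=> den_gt0; rewrite /spread -max3_pM ?ltW //.
by congr max3; apply: funext => i; rewrite circumscribed_edge normrM gtr0_norm.
Qed.

End Circumscribed.

Lemma Dmat_norms_lattice_widths {X Y q B} :
  idet X Y ^+ 2 = 1 -> homog q = B *m homog (fun i => zpt (X i) (Y i)) ->
  [set norminf (Dmat *m B *m zcol z) | z in [set z : 'I_3 -> int | exists i j, z i != z j]]
  = lattice_widths (conv3 q).
Proof.
move=> unimod hB.
have DB_lin a b c : norminf (Dmat *m B *m zcol (fun i => lin X Y a b i + c))
                    = width (conv3 q) (zpt a b).
  by rewrite zcol_lin -!mulmxA (mulmxA B) -hB norminf_Dmat_homog.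
apply/seteqP; split.
  move=> _ [z z_nonconst <-]; have [a [b [c z_lin]]] := affine_on_vertices unimod z.
  have -> : z = (fun i => lin X Y a b i + c) := funext z_lin.
  rewrite DB_lin.
  exists (zpt a b) => //; split; first by exists a, b.
  move/zpt_eq0 => -[a0 b0]; case: z_nonconst => i [j].
  by rewrite !z_lin /lin a0 b0 !mul0r !add0r eqxx.
move=> _ [_ [[a [b ->]] /zpt_eq0 /eqP ab_neq0] <-].
exists (fun i => lin X Y a b i + 0); last exact: DB_lin.
apply: contrapT => z_const.
have lin_eq i j : lin X Y a b i = lin X Y a b j.
  apply/eqP; rewrite -(addr0 (lin _ _ _ _ i)) -(addr0 (lin _ _ _ _ j)).
  by apply: contrapT => /negP ne; apply: z_const; exists i, j.
have [a0 b0] := lin_const_eq0 unimod _ _ (lin_eq i1 i0) (lin_eq i2 i0).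
by move: ab_neq0; rewrite a0 b0 eqxx.
Qed.

Lemma circumscribed_norms_lattice_widths {X Y q x} :
  idet X Y ^+ 2 = 1 -> (forall i, 0 < x i < 1) ->
  (forall i, zpt (X i) (Y i) = ((1 - x i) * (q (s3 i)).1 + x i * (q (s3 (s3 i))).1,
                               (1 - x i) * (q (s3 i)).2 + x i * (q (s3 (s3 i))).2)) ->
  [set max3 (fun i => `|x i * (y i)%:~R + (1 - x (s3 i)) * (y (s3 i))%:~R|) |
     y in [set y : 'I_3 -> int | (exists i, y i != 0) /\ y i0 + y i1 + y i2 = 0]]
  = [set circ_den x * w | w in lattice_widths (conv3 q)].
Proof.
move=> unimod x01 p_edges.
pose y_of a b i := lin X Y a b (s3 (s3 i)) - lin X Y a b (s3 i).
have max3_y_of a b :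
    max3 (fun i => `|x i * (y_of a b i)%:~R + (1 - x (s3 i)) * (y_of a b (s3 i))%:~R|)
    = circ_den x * width (conv3 q) (zpt a b).
  rewrite width_conv3 -(circumscribed_max3 p_edges) ?circ_den_gt0 //.
  by congr max3; apply: funext => i; rewrite /y_of /lin !intrB -!dot_zpt.
apply/seteqP; split.
  move=> _ [y [[k yk_neq0] sum_y0] <-].
  have [a [b y_lin]] := zero_sum_edge_values unimod y sum_y0.
  have -> : y = y_of a b := funext y_lin.
  rewrite max3_y_of; exists (width (conv3 q) (zpt a b)) => //.
  exists (zpt a b) => //; split; first by exists a, b.
  move/zpt_eq0 => -[a0 b0]; move: yk_neq0.
  by rewrite y_lin /lin a0 b0 !mul0r subrr.
move=> _ [_ [_ [[a [b ->]] /zpt_eq0 /eqP ab_neq0] <-] <-].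
exists (y_of a b); last exact: max3_y_of.
split; last by rewrite /y_of !ord3E; ring.
apply: contrapT => y_eq0.
have y_of0 i : y_of a b i = 0.
  by apply/eqP; apply: contrapT => /negP ne; apply: y_eq0; exists i.
have := y_of0 i0; have := y_of0 i1; rewrite /y_of !ord3E => e1 e0.
have [a0 b0] : a = 0 /\ b = 0 by apply: (lin_const_eq0 unimod); lia.
by move: ab_neq0; rewrite a0 b0 eqxx.
Qed.

End PlaneTriangles.

Theorem lemma12 (R : realType) (p q : 'I_3 -> R * R) (B : 'M[R]_3)
  (hpZ : forall i, Z2 (p i))
  (hponly : forall x, Z2 x -> conv3 p x -> exists i, x = p i)
  (hPtri : \det (homog p) != 0)
  (hQtri : \det (homog q) != 0)
  (hB : homog q = B *m homog p) :
  is_min [set norminf (Dmat *m B *m zcol z) |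
            z in [set z : 'I_3 -> int | exists i j, z i != z j]]
         (lw (conv3 q))
  /\
  forall x : 'I_3 -> R,
    (forall i, 0 < x i < 1) ->
    (forall i, p i = ((1 - x i) * (q (s3 i)).1 + x i * (q (s3 (s3 i))).1,
                      (1 - x i) * (q (s3 i)).2 + x i * (q (s3 (s3 i))).2)) ->
    let den := x i0 * x i1 * x i2 + (1 - x i0) * (1 - x i1) * (1 - x i2) in
    (exists M,
       is_min [set max3 (fun i => `|x i * (y i)%:~R + (1 - x (s3 i)) * (y (s3 i))%:~R|) |
                 y in [set y : 'I_3 -> int | (exists i, y i != 0) /\ y i0 + y i1 + y i2 = 0]] M
       /\ lw (conv3 q) = M / den)
    /\ tri_area q = 1 / (2 * den).
Proof.
have [XY eXY] : {XY : 'I_3 -> int * int & forall i, p i = zpt (XY i).1 (XY i).2}.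
  apply: (@boolp.choice _ _ (fun i (ab : int * int) => p i = zpt ab.1 ab.2)) => i.
  by have [a [b ->]] := hpZ i; exists (a, b).
pose X i := (XY i).1; pose Y i := (XY i).2.
have {eXY} p_XY : p = (fun i => zpt (X i) (Y i)) := funext eXY.
subst p.
rewrite det_homog in hPtri; rewrite det_homog in hQtri.
have unimod := empty_triangle_unimodular hponly hPtri.
have lw_min := lw_conv3_is_min q hQtri.
split; first by rewrite (Dmat_norms_lattice_widths unimod hB); exact: lw_min.
move=> x x01 p_edges den; change den with (circ_den x).
have den_gt0 := circ_den_gt0 x x01.
split.
  exists (circ_den x * lw (conv3 q)).
  rewrite (circumscribed_norms_lattice_widths unimod x01 p_edges).
  by split; [exact: is_min_scale den_gt0 lw_min | field; rewrite gt_eqF].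
have : `|cross (fun i => zpt (X i) (Y i) : R * R)| = 1 := norm_cross_unimodular unimod.
rewrite (cross_circumscribed p_edges) normrM gtr0_norm // => den_cross.
rewrite /tri_area det_homog.
have -> : `|cross q| = (circ_den x)^-1.
  by apply: (mulfI (lt0r_neq0 den_gt0)); rewrite den_cross mulfV ?lt0r_neq0.
by field; rewrite lt0r_neq0.
Qed.
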